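(* Let $p\in(0,1)$, $N=1/(1-p)$, $r\ge0$ an integer and $n\ge0$ even. If $G=(U,w,w')$ is a melonic graph of order $n$, then $$\frac{1}{(2n+1)^n}\,p^{(2n+1)r}\le \mathcal A_r(G).$$
   Context: Trees. A 2-rooted ternary tree of order $n$ is a finite plane tree $U$ with a root vertex of degree 2 and $n$ true vertices of degree 4; each edge is internal or a leaf (half-edge). Each true vertex $v$ has parent edge $e_1(v)$ (towards the root) and ordered children edges $e_2(v),e_3(v),e_4(v)$. One root edge has type $\alpha$, the other $\bar\alpha$; if $e_1(v)$ has type $\tau$ then $e_2(v)$ has the other type and $e_3(v),e_4(v)$ have type $\tau$. Leaves of type $\alpha$ are leaves, of type $\bar\alpha$ anti-leaves ($n+1$ each). A heap-ordering labels true vertices bijectively by $\{1,\dots,n\}$, increasing from parent to child. Graphs. For even $n$, a graph of order $n$ is $G=(U,w,w')$: $U$ heap-ordered; $w$ a bijection leaves $\to$ anti-leaves (dashed edges; internal edges are solid); $w'$ a partition of true vertices into $n/2$ pairs (wavy edges) with, for each pair $\{v,v'\}$ ($v$ of smaller label), one of eight propagators in $(S,j,k)=(S_v,j_v,k_v)$, $(S',j',k')=(S_{v'},j_{v'},k_{v'})$: $\delta_{jj'}\delta_{kk'}$, $\delta_{j,S-j'}\delta_{kk'}$, $\delta_{jj'}\delta_{k,S-k'}$, $\delta_{j,S-j'}\delta_{k,S-k'}$, $\delta_{jk'}\delta_{kj'}$, $\delta_{j,S-k'}\delta_{kj'}$, $\delta_{jk'}\delta_{k,S-j'}$, $\delta_{j,S-k'}\delta_{k,S-j'}$,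 together with $S=S'$. Amplitude. A momentum attribution gives each true vertex $S_v\ge0$, $0\le j_v,k_v\le S_v$ and momenta $j_v,S_v-j_v,k_v,S_v-k_v$ to the ends at $v$ of $e_1,\dots,e_4$. It is admissible (for root momentum $r$) if solid edges get equal momenta at both ends, both root edges carry momentum $r$, every dashed edge $e$ joins leaves of equal momentum $m(e)$, and every wavy edge satisfies $S_v=S_{v'}$ and its propagator. $\mathcal A_r(G):=N^{-n}\sum_{\text{admissible}}\prod_{e\text{ dashed}}p^{m(e)}$. Melonic graphs. Each propagator (with $S=S'$) induces a bijection from the edge-ends at $v$ to those at $v'$ (matching identified momenta). For two true vertices joined by three edges, the leading propagator is the one whose bijection maps the $v$-end of each joining edge to its $v'$-end. The trivial graph ($n=0$) is the root with a leaf and an anti-leaf joined by a dashed edge. A graph is melonic if (ignoring heap-orderings) it arises from the trivial graph by repeatedly inserting two new true vertices $v,v'$, joined to each other by three edges and by a wavy edge carrying the leading propagator, in one of these ways: (I) into a dashed edge $\{x,y\}$: $e_1(v)$ at $x$, $e_1(v')$ at $y$, dashed edges $e_2(v)$–$e_2(v')$ and $\{e_3(v),e_4(v)\}$ bijectively to $\{e_3(v'),e_4(v')\}$; (II) into a dashed edge $\{z,z'\}$: $e_1(v)$ at $z$, $e_1(v')=e_2(v)$, dashed edges $e_2(v')$–$z'$ and $\{e_3(v),e_4(v)\}$ bijectively to $\{e_3(v'),e_4(v')\}$; (III) into a dashed edge $\{z,z'\}$: $e_1(v)$ at $z$, $e_1(v')=e_a(v)$ ($a\in\{3,4\}$, $b$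 the other), dashed edges $e_2(v)$–(one of $e_3(v'),e_4(v')$), $e_b(v)$–$e_2(v')$, remaining child leaf of $v'$–$z'$; (IIs) into a solid edge from $u$ to child $z$: $v$ below $u$, $e_1(v')=e_2(v)$, $e_1(z)=e_2(v')$, dashed edges $\{e_3(v),e_4(v)\}$ bijectively to $\{e_3(v'),e_4(v')\}$; (IIIs) as (IIs) but $e_1(v')=e_a(v)$, $a\in\{3,4\}$, $e_1(z)=e_c(v')$, $c\in\{3,4\}$, dashed edges $e_2(v)$–(other of $e_3(v'),e_4(v')$) and $e_b(v)$–$e_2(v')$. *)

From HB Require Import structures.
From mathcomp Require Import all_boot all_order all_algebra.
From mathcomp Require Import all_classical all_reals.
From mathcomp Require Import fingroup perm.
From mathcomp Require Import ereal esum.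

Set Implicit Arguments.
Unset Strict Implicit.
Unset Printing Implicit Defensive.
Import Order.TTheory GRing.Theory Num.Theory.

(* Slots (edge positions hanging below a vertex).                            *)
(* A tree of order n has true vertices 'I_n.  Below the root there are two   *)
(* slots: [inl true] (the root edge of type alpha) and [inl false] (the root *)
(* edge of type alpha-bar).  Below the true vertex u there are three slots   *)
(* [inr (u, c)], c : 'I_3, standing for the children edges e_{c+2}(u).       *)
(* A slot is either occupied by a true vertex (then the edge is internal =   *)
(* solid) or it is a leaf (a half-edge).                                     *)
Definition slot (n : nat) : finType := (bool + 'I_n * 'I_3)%type.

Definition rootA {n} : slot n := inl true.
Definition rootB {n} : slot n := inl false.
Definition kid {n} (u : 'I_n) (c : 'I_3) : slot n := inr (u, c).

(* Graph data (possibly not heap ordered, used for melonic constructions).   *)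
(*  par v  : the slot in which the true vertex v hangs, i.e. the lower end of *)
(*           its parent edge e_1(v);                                         *)
(*  dsh    : the dashed edges, as an involution on leaf slots (its values on *)
(*           non-leaf slots are irrelevant);                                 *)
(*  mate   : the wavy edges, as a fixed-point-free involution on vertices;   *)
(*  prop v : the propagator of the wavy edge at v, read with v in the role of*)
(*           the unprimed vertex (S,j,k); see [prop_holds].                  *)
Record pregraph (n : nat) := PreGraph {
  par  : 'I_n -> slot n;
  dsh  : slot n -> slot n;
  mate : 'I_n -> 'I_n;
  prop : 'I_n -> 'I_8 }.

Definition leaf {n} (G : pregraph n) (s : slot n) : bool :=
  [forall v, par G v != s].

(* Edge types: true = alpha, false = alpha-bar.  The type of the edge in slot *)
(* [kid u c] is the type of e_1(u), flipped iff c = 0 (i.e. the edge is e_2). *)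
(* Computed with fuel; fuel n is enough for any tree with n true vertices.   *)
Fixpoint sty_aux {n} (pr : 'I_n -> slot n) (k : nat) (s : slot n) : bool :=
  match s with
  | inl b => b
  | inr (u, c) =>
      match k with
      | 0 => true
      | k'.+1 => addb (c == ord0) (sty_aux pr k' (pr u))
      end
  end.

Definition sty {n} (G : pregraph n) (s : slot n) : bool := sty_aux (par G) n s.

(* The eight propagators, numbered 0..7 in the order of the paper:           *)
Definition prop_holds (t : 'I_8) (S j k S' j' k' : nat) : bool :=
  (S == S') &&
  match val t with
  | 0 => (j == j') && (k == k')
  | 1 => (j == S - j') && (k == k')
  | 2 => (j == j') && (k == S - k')
  | 3 => (j == S - j') && (k == S - k')
  | 4 => (j == k') && (k == j')
  | 5 => (j == S - k') && (k == j')
  | 6 => (j == k') && (k == S - j')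
  | _ => (j == S - k') && (k == S - j')
  end.

(* The same propagator seen from the other vertex (exchanging the roles of   *)
(* (S,j,k) and (S',j',k')): 5 and 6 are exchanged, the others are fixed.     *)
Definition ptrans (t : 'I_8) : 'I_8 :=
  if val t == 5 then inord 6 else if val t == 6 then inord 5 else t.

(* The bijection induced by a propagator from the edge-ends e_1..e_4 at v    *)
(* (numbered 0..3) to the edge-ends at v' (matching identified momenta).     *)
Definition pbij_table (t : 'I_8) : seq nat :=
  match val t with
  | 0 => [:: 0; 1; 2; 3]
  | 1 => [:: 1; 0; 2; 3]
  | 2 => [:: 0; 1; 3; 2]
  | 3 => [:: 1; 0; 3; 2]
  | 4 => [:: 2; 3; 0; 1]
  | 5 => [:: 3; 2; 0; 1]
  | 6 => [:: 2; 3; 1; 0]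
  | _ => [:: 3; 2; 1; 0]
  end.
Definition pbij (t : 'I_8) (e : nat) : nat := nth 0 (pbij_table t) e.

(* t is the leading propagator for the joining edges whose ends are listed   *)
(* as pairs (end index at v, end index at v').                               *)
Definition leading (t : 'I_8) (ends : seq (nat * nat)) : bool :=
  all (fun e => pbij t e.1 == e.2) ends.

Definition is_graph {n} (G : pregraph n) : Prop :=
  [/\ injective (par G),
      (forall v (u : 'I_n) (c : 'I_3), par G v = kid u c -> u < v),
      (forall s, leaf G s ->
         [/\ leaf G (dsh G s), dsh G (dsh G s) = s
           & sty G (dsh G s) = ~~ sty G s]),
      (forall v, mate G v != v /\ mate G (mate G v) = v)
    & (forall v, prop G (mate G v) = ptrans (prop G v))].

Definition attribution (n : nat) := {ffun 'I_n -> nat * nat * nat}.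

Section Momenta.
Context {n : nat} (a : attribution n).
Definition aS v := (a v).1.1.
Definition aj v := (a v).1.2.
Definition ak v := (a v).2.
(* momentum of the end at v of e_{e+1}(v), e = 0..3 *)
Definition endmom (v : 'I_n) (e : nat) : nat :=
  match e with
  | 0 => aj v
  | 1 => aS v - aj v
  | 2 => ak v
  | _ => aS v - ak v
  end.
(* momentum of the edge in a slot, seen at its upper end (root momentum r    *)
(* for the root edges)                                                       *)
Definition slot_mom (r : nat) (s : slot n) : nat :=
  match s with
  | inl _ => r
  | inr (u, c) => endmom u (val c).+1
  end.
End Momenta.

Definition admissible {n} (G : pregraph n) (r : nat) (a : attribution n) : Prop :=
  [/\ (forall v, aj a v <= aS a v /\ ak a v <= aS a v),
      (* solid edges have equal momenta at both ends; root edges carry r *)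
      (forall v, slot_mom a r (par G v) = aj a v),
      (forall s, leaf G s -> slot_mom a r (dsh G s) = slot_mom a r s)
    &
      (forall v, aS a (mate G v) = aS a v /\
         (v < mate G v -> prop_holds (prop G v) (aS a v) (aj a v) (ak a v)
                  (aS a (mate G v)) (aj a (mate G v)) (ak a (mate G v))))].

Local Open Scope ring_scope.

(* product over dashed edges of p^{m(e)}: each dashed edge contains exactly  *)
(* one leaf of type alpha.                                                   *)
Definition weight {R : realType} {n} (G : pregraph n) (p : R) (r : nat)
  (a : attribution n) : R :=
  \prod_(s : slot n | leaf G s && sty G s) p ^+ slot_mom a r s.

Definition amplitude {R : realType} {n} (G : pregraph n) (p : R) (r : nat)
  : \bar R :=
  (((1 - p)^-1) ^- n)%:E *
    \esum_(a in [set a : attribution n | admissible G r a]) (weight G p r a)%:E.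

Definition oldv {n} (u : 'I_n) : 'I_n.+2 := widen_ord (leqW (leqnSn n)) u.
Definition oslot {n} (s : slot n) : slot n.+2 :=
  match s with inl b => inl b | inr (u, c) => inr (oldv u, c) end.
Definition nv {n} : 'I_n.+2 := inord n.
Definition nv' {n} : 'I_n.+2 := inord n.+1.

Definition c1 : 'I_3 := inord 1.
Definition c2 : 'I_3 := inord 2.
Definition cother (c : 'I_3) : 'I_3 := if c == c1 then c2 else c1.

Definition ins_common {n} (G : pregraph n) (H : pregraph n.+2)
   (moved : 'I_n -> bool) (t : 'I_8) (ends : seq (nat * nat)) : Prop :=
  [/\ (forall u, ~~ moved u -> par H (oldv u) = oslot (par G u)),
      [/\ (forall u, mate H (oldv u) = oldv (mate G u)),
          mate H nv = nv' & mate H nv' = nv],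
      (forall u, prop H (oldv u) = prop G u),
      prop H nv = t /\ prop H nv' = ptrans t
    & leading t ends].

Definition dpair {n} (H : pregraph n) (s s' : slot n) : Prop :=
  dsh H s = s' /\ dsh H s' = s.

(* (I) insertion into the dashed edge {x, y}, y = dsh G x *)
Definition ins_I {n} (G : pregraph n) (H : pregraph n.+2) : Prop :=
  exists x (ca : 'I_3) t, leaf G x /\ (ca == c1 \/ ca == c2) /\
  let y := dsh G x in
  let cb := cother ca in
  [/\ ins_common G H (fun _ => false) t
        [:: (1, 1); (2, (val ca).+1); (3, (val cb).+1)],
      par H nv = oslot x /\ par H nv' = oslot y,
      (forall s, leaf G s -> s <> x -> s <> y -> dsh H (oslot s) = oslot (dsh G s)),
      dpair H (kid nv ord0) (kid nv' ord0)
    & dpair H (kid nv c1) (kid nv' ca) /\ dpair H (kid nv c2) (kid nv' cb)].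

(* (II) insertion into the dashed edge {z, z'}, z' = dsh G z *)
Definition ins_II {n} (G : pregraph n) (H : pregraph n.+2) : Prop :=
  exists z (ca : 'I_3) t, leaf G z /\ (ca == c1 \/ ca == c2) /\
  let z' := dsh G z in
  let cb := cother ca in
  [/\ ins_common G H (fun _ => false) t
        [:: (1, 0); (2, (val ca).+1); (3, (val cb).+1)],
      par H nv = oslot z /\ par H nv' = kid nv ord0,
      (forall s, leaf G s -> s <> z -> s <> z' -> dsh H (oslot s) = oslot (dsh G s)),
      dpair H (kid nv' ord0) (oslot z')
    & dpair H (kid nv c1) (kid nv' ca) /\ dpair H (kid nv c2) (kid nv' cb)].

(* (III) insertion into the dashed edge {z, z'}, z' = dsh G z;               *)
(* e_1(v') = e_a(v) (child index ca), e_2(v) -- e_x(v') (child index cx).     *)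
Definition ins_III {n} (G : pregraph n) (H : pregraph n.+2) : Prop :=
  exists z (ca cx : 'I_3) t, leaf G z /\ (ca == c1 \/ ca == c2) /\
  (cx == c1 \/ cx == c2) /\
  let z' := dsh G z in
  let cb := cother ca in
  let cy := cother cx in
  [/\ ins_common G H (fun _ => false) t
        [:: ((val ca).+1, 0); (1, (val cx).+1); ((val cb).+1, 1)],
      par H nv = oslot z /\ par H nv' = kid nv ca,
      (forall s, leaf G s -> s <> z -> s <> z' -> dsh H (oslot s) = oslot (dsh G s)),
      dpair H (kid nv ord0) (kid nv' cx)
    & dpair H (kid nv cb) (kid nv' ord0) /\ dpair H (kid nv' cy) (oslot z')].

(* (IIs) insertion into the solid edge above the true vertex z *)
Definition ins_IIs {n} (G : pregraph n) (H : pregraph n.+2) : Prop :=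
  exists (z : 'I_n) (ca : 'I_3) t, (ca == c1 \/ ca == c2) /\
  let cb := cother ca in
  [/\ ins_common G H (fun u => u == z) t
        [:: (1, 0); (2, (val ca).+1); (3, (val cb).+1)],
      par H nv = oslot (par G z) /\ par H nv' = kid nv ord0,
      par H (oldv z) = kid nv' ord0,
      (forall s, leaf G s -> dsh H (oslot s) = oslot (dsh G s))
    & dpair H (kid nv c1) (kid nv' ca) /\ dpair H (kid nv c2) (kid nv' cb)].

(* (IIIs) insertion into the solid edge above the true vertex z;             *)
(* e_1(v') = e_a(v) (child index ca), e_1(z) = e_c(v') (child index cc).      *)
Definition ins_IIIs {n} (G : pregraph n) (H : pregraph n.+2) : Prop :=
  exists (z : 'I_n) (ca cc : 'I_3) t, (ca == c1 \/ ca == c2) /\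
  (cc == c1 \/ cc == c2) /\
  let cb := cother ca in
  let cd := cother cc in
  [/\ ins_common G H (fun u => u == z) t
        [:: ((val ca).+1, 0); (1, (val cd).+1); ((val cb).+1, 1)],
      par H nv = oslot (par G z) /\ par H nv' = kid nv ca,
      par H (oldv z) = kid nv' cc,
      (forall s, leaf G s -> dsh H (oslot s) = oslot (dsh G s))
    & dpair H (kid nv ord0) (kid nv' cd) /\ dpair H (kid nv cb) (kid nv' ord0)].

(* relabelling of the true vertices (isomorphism ignoring heap-orderings) *)
Definition sslot {n} (f : 'I_n -> 'I_n) (s : slot n) : slot n :=
  match s with inl b => inl b | inr (u, c) => inr (f u, c) end.

Definition iso {n} (sg : {perm 'I_n}) (G H : pregraph n) : Prop :=
  [/\ (forall v, par H (sg v) = sslot sg (par G v)),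
      (forall s, leaf G s -> dsh H (sslot sg s) = sslot sg (dsh G s)),
      (forall v, mate H (sg v) = sg (mate G v))
    & (forall v, prop H (sg v) = prop G v)].

Inductive melonic : forall n, pregraph n -> Prop :=
| mel_triv (G : pregraph 0) :
    dsh G rootA = rootB -> dsh G rootB = rootA -> melonic G
| mel_iso n (G H : pregraph n) (sg : {perm 'I_n}) :
    melonic G -> iso sg G H -> melonic H
| mel_I n (G : pregraph n) (H : pregraph n.+2) : melonic G -> ins_I G H -> melonic H
| mel_II n (G : pregraph n) (H : pregraph n.+2) : melonic G -> ins_II G H -> melonic H
| mel_III n (G : pregraph n) (H : pregraph n.+2) : melonic G -> ins_III G H -> melonic H
| mel_IIs n (G : pregraph n) (H : pregraph n.+2) : melonic G -> ins_IIs G H -> melonic H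
| mel_IIIs n (G : pregraph n) (H : pregraph n.+2) : melonic G -> ins_IIIs G H -> melonic H.

(* Every melonic graph of order n carries an injective family of admissible
   momentum attributions indexed by x in N^n, all of whose momenta are at most
   r + |x|.  Each melonic insertion of a pair (v, v') adds two free parameters,
   the momenta at v not fixed by the edge the pair is inserted into; the leading
   propagator then determines v' so that the three edges joining v and v', and
   the two ends of the split edge, carry matching momenta.
   A dashed edge joins leaves of opposite types with equal momenta, so the
   square of the weight is the product of p^m over all leaves; if all momenta
   are at most M this is at least p^(M (3n+2)) >= p^(2 (2n+1) M).  Summing
   p^((2n+1)(r + |x|)) over x in [0, L)^n gives p^((2n+1) r) (sum_(j<L) q^j)^n
   with q = p^(2n+1), and (1 - p) sum_(j<L) q^j >= 1/(2n+1) for L large since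
   1 - p^K < K (1 - p). *)

From Pilot Require Import Defs.
From HB Require Import structures.
From mathcomp Require Import all_boot all_order all_algebra.
From mathcomp Require Import all_classical all_reals.
From mathcomp Require Import ereal esum.
From mathcomp Require Import fingroup perm.
From mathcomp Require Import zify ring lra.
Import Order.TTheory GRing.Theory Num.Theory.

Set Implicit Arguments.
Unset Strict Implicit.
Unset Printing Implicit Defensive.

(** * Momentum triples and propagators *)

Definition triple := (nat * nat * nat)%type.

Definition bounded (x : triple) : Prop := x.1.2 <= x.1.1 /\ x.2 <= x.1.1.

Definition end_mom (x : triple) (e : nat) : nat :=
  match e with 0 => x.1.2 | 1 => x.1.1 - x.1.2 | 2 => x.2 | _ => x.1.1 - x.2 end.

Definition partner (t : 'I_8) (x : triple) : triple :=
  let: (s, j, k) := x in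
  match val t with
  | 0 => (s, j, k) | 1 => (s, s - j, k) | 2 => (s, j, s - k) | 3 => (s, s - j, s - k)
  | 4 => (s, k, j) | 5 => (s, k, s - j) | 6 => (s, s - k, j) | _ => (s, s - k, s - j)
  end.

Ltac case_ord8 t := case: t => -[|[|[|[|[|[|[|[|//]]]]]]]] ?.

Lemma partner_S t x : (partner t x).1.1 = x.1.1.
Proof. by case: x => [[s j] k]; case_ord8 t. Qed.

Lemma bounded_partner t x : bounded x -> bounded (partner t x).
Proof. by case: x => [[s j] k]; rewrite /bounded /=; case_ord8 t => /=; lia. Qed.

Lemma prop_holds_partner t x : bounded x ->
  prop_holds t x.1.1 x.1.2 x.2 (partner t x).1.1 (partner t x).1.2 (partner t x).2.
Proof.
case: x => [[s j] k]; rewrite /bounded /prop_holds /= => -[? ?].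
by case_ord8 t; rewrite /= eqxx /=; apply/andP; split; apply/eqP; lia.
Qed.

Lemma prop_holds_partner_sym t x : bounded x ->
  prop_holds (ptrans t) (partner t x).1.1 (partner t x).1.2 (partner t x).2
    x.1.1 x.1.2 x.2.
Proof.
case: x => [[s j] k]; rewrite /bounded /prop_holds /ptrans /= => -[? ?].
by case_ord8 t; rewrite /= ?inordK //= eqxx /=; apply/andP; split; apply/eqP; lia.
Qed.

Lemma end_mom_partner t x e : bounded x -> e < 4 ->
  end_mom (partner t x) (pbij t e) = end_mom x e.
Proof.
case: x => [[s j] k]; rewrite /bounded /= => -[? ?].
by case: e => [|[|[|[|//]]]] _; case_ord8 t => /=; lia.
Qed.

Lemma pbij_sum t : pbij t 0 + pbij t 1 + pbij t 2 + pbij t 3 = 6.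
Proof. by case_ord8 t. Qed.

(* [kid u c] is the slot of e_(c+2)(u), so [c1] and [c2] index e_3 and e_4. *)
Definition child34 (c : 'I_3) : Prop := c = c1 \/ c = c2.

Lemma val_c1 : nat_of_ord c1 = 1. Proof. exact: inordK. Qed.
Lemma val_c2 : nat_of_ord c2 = 2. Proof. exact: inordK. Qed.

Lemma cother_c1 : cother c1 = c2. Proof. by rewrite /cother eqxx. Qed.
Lemma cother_c2 : cother c2 = c1.
Proof. by rewrite /cother ifN // -val_eqE /= val_c1 val_c2. Qed.

Lemma child34_val c : child34 c ->
  (nat_of_ord c = 1 /\ nat_of_ord (cother c) = 2) \/
  (nat_of_ord c = 2 /\ nat_of_ord (cother c) = 1).
Proof.
by case=> ->; rewrite ?cother_c1 ?cother_c2 val_c1 val_c2; [left | right].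
Qed.

Lemma child34_cases c : child34 c ->
  forall d : 'I_3, [\/ d = ord0, d = c | d = cother c].
Proof.
move=> hc [[|[|[|//]]] hd].
- by constructor 1; apply: val_inj.
- by case: hc => ->; [constructor 2 | constructor 3; rewrite cother_c2];
    apply: ord_inj; rewrite val_c1.
- by case: hc => ->; [constructor 3; rewrite cother_c1 | constructor 2];
    apply: ord_inj; rewrite val_c2.
Qed.

Lemma child34_of_eq c : c == c1 \/ c == c2 -> child34 c.
Proof. by case=> /eqP; [left | right]. Qed.

Lemma ord3_cases (d : 'I_3) : [\/ d = ord0, d = c1 | d = c2].
Proof. by rewrite -cother_c1; apply: child34_cases; left. Qed.

Lemma kid_end_lt (c : 'I_3) : (nat_of_ord c).+1 < 4.
Proof. by rewrite ltnS ltn_ord. Qed.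

Lemma pbij_sum_child34 t c : child34 c ->
  pbij t 0 + pbij t 1 + pbij t (nat_of_ord c).+1
    + pbij t (nat_of_ord (cother c)).+1 = 6.
Proof.
by case=> ->; have := pbij_sum t; rewrite ?cother_c1 ?cother_c2 val_c1 val_c2; lia.
Qed.

(** * Extending an attribution to two new vertices *)

Lemma val_nv n : val (@nv n) = n. Proof. by rewrite /= inordK. Qed.
Lemma val_nv' n : val (@nv' n) = n.+1. Proof. by rewrite /= inordK. Qed.

Lemma vertex_cases n (w : 'I_n.+2) : [\/ exists u, w = oldv u, w = nv | w = nv'].
Proof.
have [lt_wn | ge_wn] := ltnP w n.
  by constructor 1; exists (Ordinal lt_wn); apply: val_inj.
have /orP[/eqP w_n | w_Sn] : (val w == n) || (val w == n.+1).
  by have := ltn_ord w; rewrite !eqn_leq ge_wn /=; lia.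
- by constructor 2; apply: val_inj; rewrite val_nv.
- by constructor 3; apply: val_inj; rewrite val_nv'; apply/eqP.
Qed.

Lemma slot_cases n (s : slot n.+2) :
  [\/ exists s0, s = oslot s0, exists c, s = kid nv c | exists c, s = kid nv' c].
Proof.
case: s => [b|[w c]]; first by constructor 1; exists (inl b).
case: (vertex_cases w) => [[u ->]| -> | ->].
- by constructor 1; exists (inr (u, c)).
- by constructor 2; exists c.
- by constructor 3; exists c.
Qed.

Lemma leafPn n (G : pregraph n) s : reflect (forall v, par G v <> s) (leaf G s).
Proof. by apply: (iffP forallP) => h v; [move/eqP: (h v) | apply/eqP]. Qed.

Lemma leaf_parF n (G : pregraph n) v s : par G v = s -> leaf G s = false.
Proof. by move=> <-; apply/negP => /leafPn /(_ v). Qed.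

Lemma leaf_oslot n (G : pregraph n) (H : pregraph n.+2) s :
  (forall u, exists w, par H w = oslot (par G u)) -> leaf H (oslot s) -> leaf G s.
Proof.
move=> occupied /leafPn free_s; apply/leafPn => u par_u.
by case: (occupied u) => w; rewrite par_u; apply: free_s.
Qed.

Lemma aj_endmom n (a : attribution n) v : aj a v = endmom a v 0.
Proof. by []. Qed.

Lemma val_ord0 : nat_of_ord (ord0 : 'I_3) = 0. Proof. by []. Qed.

Lemma slot_mom_kid n (a : attribution n) r v c :
  slot_mom a r (kid v c) = endmom a v (nat_of_ord c).+1.
Proof. by []. Qed.

Definition extend n (a : attribution n) (x : triple) (t : 'I_8) : attribution n.+2 :=
  [ffun w : 'I_n.+2 => if insub (val w) is Some u then a u
                       else if val w == n then x else partner t x].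

Section Extend.
Variables (n : nat) (a : attribution n) (x : triple) (t : 'I_8).
Let b := extend a x t.

Lemma extend_old u : b (oldv u) = a u.
Proof. by rewrite /b /extend ffunE /= valK. Qed.

Lemma extend_nv : b nv = x.
Proof. by rewrite /b /extend ffunE val_nv insubF ?ltnn // eqxx. Qed.

Lemma extend_nv' : b nv' = partner t x.
Proof.
rewrite /b /extend ffunE val_nv' insubF; last by rewrite ltnNge leqnSn.
by rewrite gtn_eqF.
Qed.

Lemma slot_mom_oslot r s : slot_mom b r (oslot s) = slot_mom a r s.
Proof. by case: s => [//|[u c]] /=; rewrite /endmom /aj /aS /ak extend_old. Qed.

Lemma endmom_extend_nv e : endmom b nv e = end_mom x e.
Proof. by rewrite /endmom /aj /aS /ak extend_nv; case: e => [|[|[|]]]. Qed.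

Lemma endmom_extend_nv' e : endmom b nv' e = end_mom (partner t x) e.
Proof. by rewrite /endmom /aj /aS /ak extend_nv'; case: e => [|[|[|]]]. Qed.

Lemma endmom_joined e e' : bounded x -> pbij t e = e' -> e < 4 ->
  endmom b nv' e' = endmom b nv e.
Proof.
by move=> bx <- e4; rewrite endmom_extend_nv endmom_extend_nv' end_mom_partner.
Qed.

End Extend.

(** * Families of admissible attributions *)

(* Stronger than [admissible]: the propagator condition is imposed at both ends
   of every wavy edge, which is the form the insertions preserve. *)
Definition admissible_all n (G : pregraph n) (r : nat) (a : attribution n) : Prop :=
  [/\ forall v, aj a v <= aS a v /\ ak a v <= aS a v,
      forall v, slot_mom a r (par G v) = aj a v,
      forall s, leaf G s -> slot_mom a r (dsh G s) = slot_mom a r s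
    & forall v, prop_holds (prop G v) (aS a v) (aj a v) (ak a v)
                  (aS a (mate G v)) (aj a (mate G v)) (ak a (mate G v))].

Lemma admissible_allW n (G : pregraph n) r a : admissible_all G r a -> admissible G r a.
Proof.
case=> bd hpar hdsh hprop; split=> // v.
have /andP[/eqP eqS _] := hprop v.
by split=> [|_]; [rewrite eqS | apply: hprop].
Qed.

(* Summing the weights over such a family bounds the amplitude from below. *)
Definition admissible_family n (G : pregraph n) (r : nat) : Prop :=
  exists f : {ffun 'I_n -> nat} -> attribution n, injective f /\
    forall x, admissible_all G r (f x) /\ forall v, aS (f x) v <= r + \sum_i x i.

Lemma leading_ins n (G : pregraph n) (H : pregraph n.+2) moved t e1 e1' e2 e2' e3 e3' :
  ins_common G H moved t [:: (e1, e1'); (e2, e2'); (e3, e3')] ->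
  [/\ pbij t e1 = e1', pbij t e2 = e2' & pbij t e3 = e3'].
Proof. by case=> _ _ _ _; rewrite /leading /= => /and4P[/eqP ? /eqP ? /eqP ? _]. Qed.

Definition dashed_ok n (H : pregraph n) (a : attribution n) r s : Prop :=
  slot_mom a r (dsh H s) = slot_mom a r s.

(* Qualified: perm.v also defines a [dpair]. *)
Lemma dpair_mom n (H : pregraph n) (a : attribution n) r s s' :
  Defs.dpair H s s' -> slot_mom a r s = slot_mom a r s' ->
  dashed_ok H a r s /\ dashed_ok H a r s'.
Proof. by rewrite /dashed_ok; case=> -> -> ->. Qed.




Section Insertion.
Variables (n : nat) (G : pregraph n) (H : pregraph n.+2).
Variables (moved : 'I_n -> bool) (t : 'I_8) (ends : seq (nat * nat)) (r : nat).
Hypothesis insH : ins_common G H moved t ends.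

Lemma admissible_all_extend a x : admissible_all G r a -> bounded x ->
  let b := extend a x t in
  (forall u, moved u -> slot_mom b r (par H (oldv u)) = aj b (oldv u)) ->
  slot_mom b r (par H nv) = aj b nv ->
  slot_mom b r (par H nv') = aj b nv' ->
  (forall s, leaf H s -> dashed_ok H b r s) ->
  admissible_all H r b.
Proof.
case: insH => hpar [mate_old mate_nv mate_nv'] prop_old [prop_nv prop_nv'] _.
move=> [bd par_mom _ prop_mom] bx b par_moved par_nv par_nv' dsh_mom.
split=> // w; case: (vertex_cases w) => [[u ->]| -> | ->] //.
- by rewrite /aj /ak /aS extend_old; apply: bd.
- by rewrite /aj /ak /aS extend_nv.
- by rewrite /aj /ak /aS extend_nv'; apply: bounded_partner.
- have [/par_moved // | /negbTE unmoved] := boolP (moved u).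
  by rewrite hpar ?unmoved // slot_mom_oslot par_mom /aj extend_old.
- by rewrite /aj /ak /aS mate_old prop_old !extend_old; apply: prop_mom.
- rewrite /aj /ak /aS mate_nv prop_nv extend_nv extend_nv'.
  exact: prop_holds_partner.
- rewrite /aj /ak /aS mate_nv' prop_nv' extend_nv extend_nv'.
  exact: prop_holds_partner_sym.
Qed.

Lemma leaf_oslot_ins s :
  (forall u, moved u -> par H nv = oslot (par G u)) -> leaf H (oslot s) -> leaf G s.
Proof.
move=> par_moved; apply: leaf_oslot => u.
have [/par_moved <- | unmoved] := boolP (moved u); first by exists nv.
by exists (oldv u); case: insH => ->.
Qed.

Definition restrict (x : {ffun 'I_n.+2 -> nat}) : {ffun 'I_n -> nat} :=
  [ffun u => x (oldv u)].

Lemma sum_restrict (x : {ffun 'I_n.+2 -> nat}) :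
  \sum_i x i = \sum_i restrict x i + x nv + x nv'.
Proof.
rewrite !big_ord_recr /=; congr (_ + _ + _).
- by apply: eq_bigr => i _; rewrite ffunE; congr (x _); apply: val_inj.
- by congr (x _); apply: val_inj; rewrite /= val_nv.
- by congr (x _); apply: val_inj; rewrite /= val_nv'.
Qed.

Lemma slot_mom_le (a : attribution n) M s :
  (forall v, aj a v <= aS a v /\ ak a v <= aS a v) ->
  r <= M -> (forall v, aS a v <= M) -> slot_mom a r s <= M.
Proof.
move=> bd rM SM; case: s => [//|[u c]] /=.
by move: (SM u) (bd u); case: (val c) => [|[|[|]]] /=; lia.
Qed.

(* The new vertex v takes momentum m through its parent edge, where m is the
   momentum of the edge [X] the pair is inserted into; the two new parameters
   are the momenta S_v - m - k_v and k_v. *)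
Lemma family_insert (X : slot n) :
  admissible_family G r ->
  (forall a x, admissible_all G r a -> bounded x ->
    endmom (extend a x t) nv 0 = slot_mom a r X ->
    let b := extend a x t in
    [/\ forall u, moved u -> slot_mom b r (par H (oldv u)) = aj b (oldv u),
        slot_mom b r (par H nv) = aj b nv,
        slot_mom b r (par H nv') = aj b nv'
      & forall s, leaf H s -> dashed_ok H b r s]) ->
  admissible_family H r.
Proof.
case=> f [f_inj f_adm] hins.
pose new_triple a (x : {ffun 'I_n.+2 -> nat}) : triple :=
  (slot_mom a r X + x nv + x nv', slot_mom a r X, x nv').
pose g x := extend (f (restrict x)) (new_triple (f (restrict x)) x) t.
have bnew a x : bounded (new_triple a x) by rewrite /bounded /=; lia.
exists g; split.
- move=> x y gxy.
  have fxy : f (restrict x) = f (restrict y).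
    by apply/ffunP => u; move/ffunP/(_ (oldv u)): gxy; rewrite !extend_old.
  move/ffunP/(_ nv): gxy; rewrite !extend_nv /new_triple fxy => -[+ xnv'].
  rewrite xnv' => /addIn /addnI xnv.
  apply/ffunP => w; case: (vertex_cases w) => [[u ->]| -> | ->] //.
  by move/ffunP/(_ u): (f_inj _ _ fxy); rewrite !ffunE.
- move=> x; have [adm SM] := f_adm (restrict x); have [bd _ _ _] := adm.
  have [moved_ok nv_ok nv'_ok dsh_ok] :=
    hins _ _ adm (bnew _ x) (endmom_extend_nv _ _ _ 0).
  split; first exact: admissible_all_extend.
  have Xle := slot_mom_le X bd (leq_addr _ r) SM.
  move=> w; rewrite sum_restrict.
  case: (vertex_cases w) => [[u ->]| -> | ->];
    rewrite /aS ?extend_old ?extend_nv ?extend_nv' ?partner_S /=.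
  + by apply: leq_trans (SM u) _; rewrite leq_add2l -addnA leq_addr.
  + by rewrite !addnA !leq_add2r.
  + by rewrite !addnA !leq_add2r.
Qed.

End Insertion.




(** * Melonic graphs *)

Lemma family_ins_I n (G : pregraph n) H r :
  admissible_family G r -> ins_I G H -> admissible_family H r.
Proof.
move=> fG [x [ca [t [lx [/child34_of_eq hca]]]]] /=; set y := dsh G x.
move=> [hc [px py] hold d0 [d1 d2]].
have [pb1 pb2 pb3] : [/\ pbij t 1 = 1, pbij t 2 = (nat_of_ord ca).+1
                       & pbij t 3 = (nat_of_ord (cother ca)).+1] := leading_ins hc.
have pb0 : pbij t 0 = 0 by have := pbij_sum t; have := child34_val hca; lia.
apply: (family_insert (X := x) hc fG) => a xv [_ _ dG _] bx mx /=.
set b := extend a xv t.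
have [m0 m0'] : dashed_ok H b r (kid nv ord0) /\ dashed_ok H b r (kid nv' ord0).
  by apply: dpair_mom d0 _; rewrite !slot_mom_kid val_ord0 (endmom_joined a bx pb1).
have [m1 m1'] : dashed_ok H b r (kid nv c1) /\ dashed_ok H b r (kid nv' ca).
  by apply: dpair_mom d1 _; rewrite !slot_mom_kid val_c1 (endmom_joined a bx pb2).
have [m2 m2'] : dashed_ok H b r (kid nv c2) /\ dashed_ok H b r (kid nv' (cother ca)).
  by apply: dpair_mom d2 _; rewrite !slot_mom_kid val_c2 (endmom_joined a bx pb3).
split=> //.
- by rewrite px slot_mom_oslot -mx.
- by rewrite py slot_mom_oslot /y dG // -mx aj_endmom (endmom_joined a bx pb0).
- move=> s; case: (slot_cases s) => [[s0 ->]|[c ->]|[c ->]] leaf_s.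
  + have lG : leaf G s0 by apply: (leaf_oslot_ins hc) leaf_s.
    have [e | nx] := eqVneq s0 x; first by rewrite e (leaf_parF px) in leaf_s.
    have [e | ny] := eqVneq s0 y; first by rewrite e (leaf_parF py) in leaf_s.
    by rewrite /dashed_ok hold ?slot_mom_oslot ?dG //; apply/eqP.
  + by case: (ord3_cases c) => ->.
  + by case: (child34_cases hca c) => ->.
Qed.

Lemma family_ins_II n (G : pregraph n) H r :
  admissible_family G r -> ins_II G H -> admissible_family H r.
Proof.
move=> fG [z [ca [t [lz [/child34_of_eq hca]]]]] /=; set z' := dsh G z.
move=> [hc [pz pz'] hold d0 [d1 d2]].
have [pb1 pb2 pb3] : [/\ pbij t 1 = 0, pbij t 2 = (nat_of_ord ca).+1
                       & pbij t 3 = (nat_of_ord (cother ca)).+1] := leading_ins hc.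
have pb0 : pbij t 0 = 1 by have := pbij_sum t; have := child34_val hca; lia.
apply: (family_insert (X := z) hc fG) => a xv [_ _ dG _] bx mx /=.
set b := extend a xv t.
have [m0' mz'] : dashed_ok H b r (kid nv' ord0) /\ dashed_ok H b r (oslot z').
  apply: dpair_mom d0 _; rewrite slot_mom_kid val_ord0 (endmom_joined a bx pb0) //.
  by rewrite slot_mom_oslot /z' dG.
have [m1 m1'] : dashed_ok H b r (kid nv c1) /\ dashed_ok H b r (kid nv' ca).
  by apply: dpair_mom d1 _; rewrite !slot_mom_kid val_c1 (endmom_joined a bx pb2).
have [m2 m2'] : dashed_ok H b r (kid nv c2) /\ dashed_ok H b r (kid nv' (cother ca)).
  by apply: dpair_mom d2 _; rewrite !slot_mom_kid val_c2 (endmom_joined a bx pb3).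
split=> //.
- by rewrite pz slot_mom_oslot -mx.
- by rewrite pz' slot_mom_kid val_ord0 aj_endmom (endmom_joined a bx pb1).
- move=> s; case: (slot_cases s) => [[s0 ->]|[c ->]|[c ->]] leaf_s.
  + have lG : leaf G s0 by apply: (leaf_oslot_ins hc) leaf_s.
    have [e | nz] := eqVneq s0 z; first by rewrite e (leaf_parF pz) in leaf_s.
    have [-> // | nz'] := eqVneq s0 z'.
    by rewrite /dashed_ok hold ?slot_mom_oslot ?dG //; apply/eqP.
  + case: (ord3_cases c) leaf_s => -> leaf_s //.
    by rewrite (leaf_parF pz') in leaf_s.
  + by case: (child34_cases hca c) => ->.
Qed.

Lemma family_ins_III n (G : pregraph n) H r :
  admissible_family G r -> ins_III G H -> admissible_family H r.
Proof.
move=> fG [z [ca [cx [t [lz [/child34_of_eq hca [/child34_of_eq hcx]]]]]]] /=.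
set z' := dsh G z; move=> [hc [pz pz'] hold d0 [d1 d2]].
have [pba pb1 pbb] : [/\ pbij t (nat_of_ord ca).+1 = 0, pbij t 1 = (nat_of_ord cx).+1
                       & pbij t (nat_of_ord (cother ca)).+1 = 1] := leading_ins hc.
have pb0 : pbij t 0 = (nat_of_ord (cother cx)).+1.
  by have := pbij_sum_child34 t hca; have := child34_val hcx; lia.
apply: (family_insert (X := z) hc fG) => a xv [_ _ dG _] bx mx /=.
set b := extend a xv t.
have [m0 m0'] : dashed_ok H b r (kid nv ord0) /\ dashed_ok H b r (kid nv' cx).
  by apply: dpair_mom d0 _; rewrite !slot_mom_kid val_ord0 (endmom_joined a bx pb1).
have [m1 m1'] : dashed_ok H b r (kid nv (cother ca)) /\ dashed_ok H b r (kid nv' ord0).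
  apply: dpair_mom d1 _.
  by rewrite !slot_mom_kid val_ord0 (endmom_joined a bx pbb (kid_end_lt _)).
have [m2 mz'] : dashed_ok H b r (kid nv' (cother cx)) /\ dashed_ok H b r (oslot z').
  apply: dpair_mom d2 _; rewrite slot_mom_kid (endmom_joined a bx pb0) //.
  by rewrite slot_mom_oslot /z' dG.
split=> //.
- by rewrite pz slot_mom_oslot -mx.
- by rewrite pz' slot_mom_kid aj_endmom (endmom_joined a bx pba (kid_end_lt _)).
- move=> s; case: (slot_cases s) => [[s0 ->]|[c ->]|[c ->]] leaf_s.
  + have lG : leaf G s0 by apply: (leaf_oslot_ins hc) leaf_s.
    have [e | nz] := eqVneq s0 z; first by rewrite e (leaf_parF pz) in leaf_s.
    have [-> // | nz'] := eqVneq s0 z'.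
    by rewrite /dashed_ok hold ?slot_mom_oslot ?dG //; apply/eqP.
  + case: (child34_cases hca c) leaf_s => -> leaf_s //.
    by rewrite (leaf_parF pz') in leaf_s.
  + by case: (child34_cases hcx c) => ->.
Qed.

Lemma family_ins_IIs n (G : pregraph n) H r :
  admissible_family G r -> ins_IIs G H -> admissible_family H r.
Proof.
move=> fG [z [ca [t [/child34_of_eq hca]]]] /=.
move=> [hc [pv pv'] pz hold [d1 d2]].
have [pb1 pb2 pb3] : [/\ pbij t 1 = 0, pbij t 2 = (nat_of_ord ca).+1
                       & pbij t 3 = (nat_of_ord (cother ca)).+1] := leading_ins hc.
have pb0 : pbij t 0 = 1 by have := pbij_sum t; have := child34_val hca; lia.
have moved_nv u : u == z -> par H nv = oslot (par G u) by move/eqP->.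
apply: (family_insert (X := par G z) hc fG) => a xv [_ pG dG _] bx mx /=.
set b := extend a xv t.
have [m1 m1'] : dashed_ok H b r (kid nv c1) /\ dashed_ok H b r (kid nv' ca).
  by apply: dpair_mom d1 _; rewrite !slot_mom_kid val_c1 (endmom_joined a bx pb2).
have [m2 m2'] : dashed_ok H b r (kid nv c2) /\ dashed_ok H b r (kid nv' (cother ca)).
  by apply: dpair_mom d2 _; rewrite !slot_mom_kid val_c2 (endmom_joined a bx pb3).
split.
- move=> u /eqP ->; rewrite pz slot_mom_kid val_ord0 (endmom_joined a bx pb0) //.
  by rewrite mx pG /aj extend_old.
- by rewrite pv slot_mom_oslot -mx.
- by rewrite pv' slot_mom_kid val_ord0 aj_endmom (endmom_joined a bx pb1).
- move=> s; case: (slot_cases s) => [[s0 ->]|[c ->]|[c ->]] leaf_s.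
  + have lG := leaf_oslot_ins hc moved_nv leaf_s.
    by rewrite /dashed_ok hold ?slot_mom_oslot ?dG.
  + case: (ord3_cases c) leaf_s => -> leaf_s //.
    by rewrite (leaf_parF pv') in leaf_s.
  + case: (child34_cases hca c) leaf_s => -> leaf_s //.
    by rewrite (leaf_parF pz) in leaf_s.
Qed.

Lemma family_ins_IIIs n (G : pregraph n) H r :
  admissible_family G r -> ins_IIIs G H -> admissible_family H r.
Proof.
move=> fG [z [ca [cc [t [/child34_of_eq hca [/child34_of_eq hcc]]]]]] /=.
move=> [hc [pv pv'] pz hold [d0 d1]].
have [pba pb1 pbb] : [/\ pbij t (nat_of_ord ca).+1 = 0,
    pbij t 1 = (nat_of_ord (cother cc)).+1
  & pbij t (nat_of_ord (cother ca)).+1 = 1] := leading_ins hc.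
have pb0 : pbij t 0 = (nat_of_ord cc).+1.
  by have := pbij_sum_child34 t hca; have := child34_val hcc; lia.
have moved_nv u : u == z -> par H nv = oslot (par G u) by move/eqP->.
apply: (family_insert (X := par G z) hc fG) => a xv [_ pG dG _] bx mx /=.
set b := extend a xv t.
have [m0 m0'] : dashed_ok H b r (kid nv ord0) /\ dashed_ok H b r (kid nv' (cother cc)).
  by apply: dpair_mom d0 _; rewrite !slot_mom_kid val_ord0 (endmom_joined a bx pb1).
have [m1 m1'] : dashed_ok H b r (kid nv (cother ca)) /\ dashed_ok H b r (kid nv' ord0).
  apply: dpair_mom d1 _.
  by rewrite !slot_mom_kid val_ord0 (endmom_joined a bx pbb (kid_end_lt _)).
split.
- move=> u /eqP ->; rewrite pz slot_mom_kid (endmom_joined a bx pb0) //.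
  by rewrite mx pG /aj extend_old.
- by rewrite pv slot_mom_oslot -mx.
- by rewrite pv' slot_mom_kid aj_endmom (endmom_joined a bx pba (kid_end_lt _)).
- move=> s; case: (slot_cases s) => [[s0 ->]|[c ->]|[c ->]] leaf_s.
  + have lG := leaf_oslot_ins hc moved_nv leaf_s.
    by rewrite /dashed_ok hold ?slot_mom_oslot ?dG.
  + case: (child34_cases hca c) leaf_s => -> leaf_s //.
    by rewrite (leaf_parF pv') in leaf_s.
  + case: (child34_cases hcc c) leaf_s => -> leaf_s //.
    by rewrite (leaf_parF pz) in leaf_s.
Qed.

Lemma family_trivial (G : pregraph 0) r : admissible_family G r.
Proof.
exists (fun _ => [ffun=> (0, 0, 0)]); split=> [x y _ | x]; first by apply/ffunP => -[].
split; last by case.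
split; try by case.
by move=> [b|[[]]] // _; case: (dsh G (inl b)) => [b'|[[]]].
Qed.

Lemma slot_mom_sslot n (a b : attribution n) (sg : {perm 'I_n}) r s :
  (forall u, b (sg u) = a u) -> slot_mom b r (sslot sg s) = slot_mom a r s.
Proof. by move=> bE; case: s => [//|[u c]]; rewrite /= /endmom /aj /aS /ak bE. Qed.

Lemma sslotK n (sg : {perm 'I_n}) s : sslot sg (sslot (sg^-1)%g s) = s.
Proof. by case: s => [//|[u c]] /=; rewrite permKV. Qed.

Lemma family_iso n (G H : pregraph n) (sg : {perm 'I_n}) r :
  admissible_family G r -> iso sg G H -> admissible_family H r.
Proof.
case=> f [f_inj f_adm] [par_sg dsh_sg mate_sg prop_sg].
pose xs (x : {ffun 'I_n -> nat}) := [ffun u => x (sg u)].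
pose g x := [ffun v => f (xs x) ((sg^-1)%g v)].
have gE x u : g x (sg u) = f (xs x) u by rewrite ffunE permK.
exists g; split.
- move=> x y gxy; have /f_inj fxy : f (xs x) = f (xs y).
    by apply/ffunP => u; rewrite -!gE gxy.
  apply/ffunP => v; rewrite -(permKV sg v).
  by move/ffunP/(_ ((sg^-1)%g v)): fxy; rewrite !ffunE.
- move=> x; have [[bd pG dG propG] SM] := f_adm (xs x).
  have sum_xs : \sum_i x i = \sum_i xs x i.
    by rewrite (reindex_inj (@perm_inj _ sg)); apply: eq_bigr => i _; rewrite ffunE.
  have on_sg (P : 'I_n -> Prop) : (forall u, P (sg u)) -> forall v, P v.
    by move=> Psg v; rewrite -(permKV sg v).
  split; [split|]; try apply: on_sg => u.
  + by rewrite /aj /ak /aS gE; apply: bd.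
  + by rewrite par_sg (slot_mom_sslot _ _ (gE x)) /aj gE pG.
  + move=> s; rewrite -(sslotK sg s); set s0 := sslot _ s => leaf_s.
    have lG : leaf G s0.
      apply/leafPn => u par_u; move/leafPn: leaf_s => /(_ (sg u)).
      by rewrite par_sg par_u.
    by rewrite dsh_sg // !(slot_mom_sslot _ _ (gE x)) dG.
  + by rewrite mate_sg prop_sg /aS /aj /ak !gE; apply: propG.
  + by rewrite /aS gE sum_xs; apply: SM.
Qed.

Lemma melonic_family n (G : pregraph n) r : melonic G -> admissible_family G r.
Proof.
elim=> {n G} [G _ _ | n G H sg _ fG | n G H _ fG | n G H _ fG | n G H _ fG
             | n G H _ fG | n G H _ fG].
- exact: family_trivial.
- exact: family_iso.
- exact: family_ins_I.
- exact: family_ins_II.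
- exact: family_ins_III.
- exact: family_ins_IIs.
- exact: family_ins_IIIs.
Qed.

(** * Weights and the amplitude *)

Local Open Scope ring_scope.

Lemma card_slot n : #|slot n| = (3 * n + 2)%N.
Proof. by rewrite card_sum card_bool card_prod !card_ord addnC mulnC. Qed.

(* Each dashed edge joins a leaf of type alpha to one of type alpha-bar with
   the same momentum, so the weight counts every leaf exactly once after
   squaring. *)
Lemma weight_sqr (R : realType) n (G : pregraph n) (p : R) r a :
  is_graph G -> (forall s, leaf G s -> dashed_ok G a r s) ->
  weight G p r a ^+ 2 = \prod_(s | leaf G s) p ^+ slot_mom a r s.
Proof.
case=> _ _ dshG _ _ dG.
rewrite (bigID (sty G)) /= expr2; congr (_ * _).
rewrite (reindex_onto (dsh G) (dsh G)); last by move=> s /andP[/dshG[]].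
apply: eq_big => [s | s /andP[ls _]]; last by rewrite dG.
apply/idP/idP => [/andP[ls sty_s] | /andP[/andP[ls' nsty'] /eqP e]].
- by have [-> -> ->] := dshG _ ls; rewrite sty_s eqxx.
- by have [] := dshG _ ls'; rewrite e => -> _ ->.
Qed.

Lemma weight_ge (R : realType) n (G : pregraph n) (p : R) r a M :
  0 <= p <= 1 -> is_graph G -> admissible_all G r a ->
  (r <= M)%N -> (forall v, aS a v <= M)%N ->
  p ^+ ((2 * n + 1) * M) <= weight G p r a.
Proof.
move=> /andP[p0 p1] gG [bd _ dG _] rM SM.
have pw0 k : 0 <= p ^+ k by rewrite exprn_ge0.
have pw1 k : p ^+ k <= 1 by rewrite exprn_ile1.
have leaves_ge : p ^+ (M * (3 * n + 2)) <= \prod_(s | leaf G s) p ^+ slot_mom a r s.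
  apply: le_trans (_ : \prod_s p ^+ slot_mom a r s <= _).
    rewrite exprM -card_slot -prodr_const; apply: ler_prod => s _.
    by rewrite pw0 ler_wiXn2l // slot_mom_le.
  rewrite [leLHS](bigID (fun s => leaf G s)) /= -[leRHS]mulr1.
  by rewrite ler_wpM2l ?prodr_ge0 ?prodr_ile1 // => s _; rewrite pw0 pw1.
rewrite -(@ler_pXn2r _ 2) ?nnegrE ?pw0 ?prodr_ge0 // weight_sqr //.
by apply: le_trans leaves_ge; rewrite -exprM ler_wiXn2l //; lia.
Qed.

Lemma mulr_sum_geometric (R : pzRingType) (q : R) L :
  (1 - q) * \sum_(j < L) q ^+ j = 1 - q ^+ L.
Proof. by rewrite -[RHS]opprB subrX1 -mulNr opprB. Qed.

Lemma exists_expr_le (R : realType) (q e : R) :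
  0 <= q < 1 -> 0 < e -> exists L, q ^+ L <= e.
Proof.
move=> /andP[q0 q1] e0; have q1' : 0 < 1 - q by rewrite subr_gt0.
have qL_small L : q ^+ L * (1 - q) * L%:R <= 1.
  have : L%:R * q ^+ L <= \sum_(j < L) q ^+ j.
    rewrite mulr_natl -[X in _ *+ X](card_ord L) -sumr_const; apply: ler_sum => j _.
    by apply: ler_wiXn2l; rewrite ?q0 ?ltW // ltnW.
  have := mulr_sum_geometric q L; have : 0 <= q ^+ L by rewrite exprn_ge0.
  nra.
have B0 : 0 <= (e * (1 - q))^-1 by rewrite invr_ge0 mulr_ge0 ?ltW.
set L := Num.Def.archi_bound (e * (1 - q))^-1; exists L.
have : q ^+ L * (1 - q) * (e * (1 - q))^-1 <= 1.
  apply: le_trans (qL_small L); apply: ler_wpM2l.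
    by rewrite mulr_ge0 ?exprn_ge0 ?(ltW q1').
  exact: ltW (archi_boundP B0).
have -> : q ^+ L * (1 - q) * (e * (1 - q))^-1 = q ^+ L / e.
  by field; rewrite !gt_eqF.
by rewrite ler_pdivrMr // mul1r.
Qed.

Lemma sum_expr_bounds (R : realFieldType) (p : R) K : 0 <= p < 1 -> (1 < K)%N ->
  1 <= \sum_(i < K) p ^+ i < K%:R.
Proof.
move=> /andP[p0 p1]; case: K => [|[|K]] // _; rewrite !big_ord_recl /= expr0 expr1.
set t := \sum_(i < K) _.
have t0 : 0 <= t by apply: sumr_ge0 => i _; rewrite exprn_ge0.
have tK : t <= \sum_(i < K) (1 : R) by apply: ler_sum => i _; rewrite exprn_ile1 // ltW.
rewrite sumr_const card_ord in tK; rewrite -addn2 natrD; lra.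
Qed.

(* The truncated geometric series beats 1/K because 1 - p^K < K (1 - p). *)
Lemma truncated_geometric_ge (R : realType) (p : R) K :
  0 < p < 1 -> (1 < K)%N ->
  exists L, K%:R^-1 <= (1 - p) * \sum_(j < L) (p ^+ K) ^+ j.
Proof.
move=> /andP[p0 p1] K1; have p01 : 0 <= p < 1 by rewrite ltW.
have /andP[s_ge1 s_ltK] := sum_expr_bounds p01 K1.
set s := \sum_(i < K) p ^+ i in s_ge1 s_ltK *.
have K0 : 0 < K%:R :> R by rewrite ltr0n ltnW.
have q0 : 0 <= p ^+ K by rewrite exprn_ge0 ?ltW.
have q1 : p ^+ K < 1 by rewrite exprn_ilt1 ?ltW // -lt0n ltnW.
have [L qL] : exists L, (p ^+ K) ^+ L <= 1 - s / K%:R.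
  by apply: exists_expr_le; rewrite ?q0 ?q1 // subr_gt0 ltr_pdivrMr ?mul1r.
exists L.
have geo : (1 - p ^+ K) * \sum_(j < L) (p ^+ K) ^+ j = 1 - (p ^+ K) ^+ L.
  exact: mulr_sum_geometric.
rewrite -(mulr_sum_geometric p K) -/s in geo.
rewrite -(ler_pM2l K0) mulfV ?gt_eqF // -(ler_pM2r (lt_le_trans ltr01 s_ge1)) mul1r.
have sK : s / K%:R * K%:R = s by rewrite mulfVK ?gt_eqF.
nra.
Qed.

Local Open Scope classical_set_scope.

Lemma esum_weight_ge (R : realType) n (G : pregraph n) (p : R) r L :
  0 <= p <= 1 -> is_graph G -> admissible_family G r ->
  ((p ^+ ((2 * n + 1) * r) * (\sum_(j < L) (p ^+ (2 * n + 1)) ^+ j) ^+ n)%:E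
    <= \esum_(a in [set a : attribution n | admissible G r a]) (weight G p r a)%:E)%E.
Proof.
move=> p01 gG [f [f_inj f_adm]]; have /andP[p0 _] := p01.
pose nat_of (y : {ffun 'I_n -> 'I_L}) : {ffun 'I_n -> nat} := [ffun i => val (y i)].
have nat_of_inj : injective nat_of.
  move=> y z /ffunP yz; apply/ffunP => i; apply: val_inj.
  by move: (yz i); rewrite !ffunE.
apply: esum_ge; exists ((f \o nat_of) @` setT).
  split; first exact/finite_image/finite_finset.
  by move=> _ [y _ <-]; apply: admissible_allW; case: (f_adm (nat_of y)).
rewrite fsbig_image; last by move=> y z _ _ /f_inj /nat_of_inj.
rewrite (fsbigE (enum {ffun 'I_n -> 'I_L})) ?enum_uniq //; last first.
  by move=> i _; rewrite mem_enum.
under eq_bigl do rewrite in_setT.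
rewrite big_enum /= sumEFin lee_fin.
rewrite -[X in _ * (_ ^+ X)](card_ord n) -prodr_const bigA_distr_bigA /= mulr_sumr.
apply: ler_sum => y _; have [adm SM] := f_adm (nat_of y).
apply: le_trans (weight_ge p01 gG adm (leq_addr _ r) SM).
rewrite mulnDr (exprD p ((2 * n + 1) * r)).
apply: ler_wpM2l; first by rewrite exprn_ge0.
rewrite big_distrr /= -prodrXr.
by apply: ler_prod => i _; rewrite ffunE -exprM exprn_ge0 ?lexx.
Qed.

Local Close Scope classical_set_scope.

Theorem lemma7 (R : realType) (p : R) (r n : nat) (G : pregraph n) :
  0 < p < 1 -> ~~ odd n -> is_graph G -> melonic G ->
  ((((2 * n + 1)%:R ^+ n)^-1 * p ^+ ((2 * n + 1) * r))%:E
     <= amplitude G p r)%E.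
Proof.
move=> p_01 _ gG mG; have /andP[p0 p1] := p_01.
have p01 : 0 <= p <= 1 by rewrite !ltW.
have [L KL] : exists L, ((2 * n + 1)%:R ^+ n)^-1
    <= ((1 - p) * \sum_(j < L) (p ^+ (2 * n + 1)) ^+ j) ^+ n.
  have [-> | n0] := posnP n; first by exists 0; rewrite !expr0 invr1.
  have K1 : (1 < 2 * n + 1)%N by lia.
  have [L KL] := truncated_geometric_ge p_01 K1.
  exists L; rewrite -exprVn lerXn2r ?nnegrE ?invr_ge0 //.
  apply: mulr_ge0; first by rewrite subr_ge0 ltW.
  by apply: sumr_ge0 => j _; rewrite !exprn_ge0 // ltW.
have c0 : (0 <= ((1 - p)^-1 ^- n)%:E)%E.
  by rewrite lee_fin invr_ge0 exprn_ge0 // invr_ge0 subr_ge0 ltW.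
apply: le_trans (lee_wpmul2l c0 (esum_weight_ge L p01 gG (melonic_family r mG))).
rewrite lee_fin exprVn invrK mulrCA [leLHS]mulrC -exprMn.
by apply: ler_wpM2l; first by rewrite exprn_ge0 // ltW.
Qed.
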